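(* The canonical model $\langle W,\mathcal{N},V\rangle$ for IML1 satisfies the $T$-condition: for all $w,v\in W$, if $v\in\bigcup\mathcal{N}_w$ then $\bigcap\mathcal{N}_v\subseteq\bigcup\mathcal{N}_w$.
   Context: Formulas are built from a denumerable set $PV$ of propositional variables and $\bot$ using $\land,\lor,\rightarrow$ and unary $\Delta$. The axioms of IML1 are all instances of the axiom schemes of intuitionistic propositional calculus, of K: $\Delta(\varphi\rightarrow\psi)\rightarrow(\Delta\varphi\rightarrow\Delta\psi)$ and of T: $\Delta\varphi\rightarrow\varphi$. An IML1-theory is a set of formulas containing all axioms and closed under modus ponens and under RN ($\varphi\in w\Rightarrow\Delta\varphi\in w$). A theory $w$ is prime if $\bot\notin w$ and $\varphi\lor\psi\in w$ iff ($\varphi\in w$ or $\psi\in w$). Canonical model: $W$ = set of all prime IML1-theories; for $w\in W$, $A_w=\{v\in W:w\subseteq v\}$, $B_w=\{v\in W:\forall\varphi\,(\Delta\varphi\in w\Rightarrow\varphi\in v)\}$, $\mathcal{N}_w=\{X\subseteq W:A_w\subseteq X\subseteq B_w\}$, so $\bigcap\mathcal{N}_w=A_w$ and $\bigcup\mathcal{N}_w=B_w$; $V(q)=\{w\in W:q\in w\}$. *)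

Set Implicit Arguments.

Inductive form : Type :=
| Var : nat -> form
| Bot : form
| And : form -> form -> form
| Or  : form -> form -> form
| Imp : form -> form -> form
| Delta : form -> form.

Inductive axiom : form -> Prop :=
| ax_K1 : forall p q, axiom (Imp p (Imp q p))
| ax_S  : forall p q r,
    axiom (Imp (Imp p (Imp q r)) (Imp (Imp p q) (Imp p r)))
| ax_AndE1 : forall p q, axiom (Imp (And p q) p)
| ax_AndE2 : forall p q, axiom (Imp (And p q) q)
| ax_AndI  : forall p q, axiom (Imp p (Imp q (And p q)))
| ax_OrI1  : forall p q, axiom (Imp p (Or p q))
| ax_OrI2  : forall p q, axiom (Imp q (Or p q))
| ax_OrE   : forall p q r,
    axiom (Imp (Imp p r) (Imp (Imp q r) (Imp (Or p q) r)))
| ax_EFQ   : forall p, axiom (Imp Bot p)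
| ax_Kbox  : forall p q,
    axiom (Imp (Delta (Imp p q)) (Imp (Delta p) (Delta q)))
| ax_Tbox  : forall p, axiom (Imp (Delta p) p).

Definition theory (w : form -> Prop) : Prop :=
  (forall p, axiom p -> w p) /\
  (forall p q, w (Imp p q) -> w p -> w q) /\
  (forall p, w p -> w (Delta p)).

Definition prime (w : form -> Prop) : Prop :=
  ~ w Bot /\ (forall p q, w (Or p q) <-> (w p \/ w q)).

Definition prime_theory (w : form -> Prop) : Prop := theory w /\ prime w.

Definition W : Type := { w : form -> Prop | prime_theory w }.

Definition thy (w : W) : form -> Prop := proj1_sig w.

Definition A_set (w : W) : W -> Prop :=
  fun v => forall p, thy w p -> thy v p.

Definition B_set (w : W) : W -> Prop :=
  fun v => forall p, thy w (Delta p) -> thy v p.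

Definition Nbhd (w : W) : (W -> Prop) -> Prop :=
  fun X => (forall u, A_set w u -> X u) /\ (forall u, X u -> B_set w u).

Definition V (q : nat) : W -> Prop := fun w => thy w (Var q).

Definition bigcap (N : (W -> Prop) -> Prop) : W -> Prop :=
  fun u => forall X, N X -> X u.

Definition bigcup (N : (W -> Prop) -> Prop) : W -> Prop :=
  fun u => exists X, N X /\ X u.


(* If v is in B_w and u extends v, then every
   p with Delta p in w lies in v, hence in u; so u is in B_w. *)

Lemma theory_Delta_elim (w : form -> Prop) (p : form) :
  theory w -> w (Delta p) -> w p.
Proof.
  intros [Hax [Hmp _]] Hd.
  exact (Hmp _ _ (Hax _ (ax_Tbox p)) Hd).
Qed.

Lemma A_set_sub_B_set (w u : W) : A_set w u -> B_set w u.
Proof.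
  intros Hwu p Hd. apply Hwu.
  apply theory_Delta_elim; [exact (proj1 (proj2_sig w)) | exact Hd].
Qed.

Lemma Nbhd_A_set (w : W) : Nbhd w (A_set w).
Proof. split; [auto | apply A_set_sub_B_set]. Qed.

Lemma Nbhd_B_set (w : W) : Nbhd w (B_set w).
Proof. split; [apply A_set_sub_B_set | auto]. Qed.

Lemma bigcap_Nbhd (w u : W) : bigcap (Nbhd w) u <-> A_set w u.
Proof.
  split.
  - intros Hu. exact (Hu _ (Nbhd_A_set w)).
  - intros Hwu X [HA _]. exact (HA u Hwu).
Qed.

Lemma bigcup_Nbhd (w u : W) : bigcup (Nbhd w) u <-> B_set w u.
Proof.
  split.
  - intros [X [[_ HB] Xu]]. exact (HB u Xu).
  - intros Hwu. exists (B_set w). split; [apply Nbhd_B_set | exact Hwu].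
Qed.

Lemma B_set_A_set_trans (w v u : W) : B_set w v -> A_set v u -> B_set w u.
Proof. intros Hwv Hvu p Hd. exact (Hvu p (Hwv p Hd)). Qed.

Theorem lemma6p2 :
  forall w v : W,
    bigcup (Nbhd w) v ->
    forall u : W, bigcap (Nbhd v) u -> bigcup (Nbhd w) u.
Proof.
  intros w v Hv u Hu.
  apply bigcup_Nbhd.
  apply B_set_A_set_trans with v.
  - apply bigcup_Nbhd. exact Hv.
  - apply bigcap_Nbhd. exact Hu.
Qed.
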